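(* Let $\mathcal{X}$ be an input alphabet, $\mathcal{Z}$ an output alphabet, $q(\cdot\mid\cdot)$ an $\varepsilon$-LDP mechanism from $\mathcal{X}$ to $\mathcal{Z}$, $p$ any reference distribution on $\mathcal{Z}$, and $N\ge1$ any number of candidates. Then the MRC index distribution $\pi^{\mathrm{mrc}}$ is a $2\varepsilon$-LDP mechanism, i.e. for all $\mathbf{x},\mathbf{x}'\in\mathcal{X}$, all candidate tuples $(\mathbf{z}_1,\dots,\mathbf{z}_N)\in\mathcal{Z}^N$ and all $k\in[N]$, $\pi^{\mathrm{mrc}}_{\mathbf{x}}(k)\le e^{2\varepsilon}\pi^{\mathrm{mrc}}_{\mathbf{x}'}(k)$.
   Context: A mechanism $q$ maps $\mathbf{x}\in\mathcal{X}$ to a random $\mathbf{z}\in\mathcal{Z}$ with conditional density (or pmf) $q(\mathbf{z}\mid\mathbf{x})$; it is $\varepsilon$-LDP if $q(\mathbf{z}\mid\mathbf{x})\le e^{\varepsilon}q(\mathbf{z}\mid\mathbf{x}')$ for all $\mathbf{x},\mathbf{x}',\mathbf{z}$. When a mechanism also depends on shared randomness $\mathbf{u}$ (known to user and server, independent of $\mathbf{x}$), the $\varepsilon$-LDP requirement is that the inequality holds for every fixed value of $\mathbf{u}$. Minimal Random Coding (MRC): draw candidates $\mathbf{z}_1,\dots,\mathbf{z}_N$ i.i.d. from $p$ (the shared randomness), set $w(k)=q(\mathbf{z}_k\mid\mathbf{x})/p(\mathbf{z}_k)$ and $\pi^{\mathrm{mrc}}_{\mathbf{x}}(k)=w(k)/\sum_{k'=1}^N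 w(k')$ for $k\in[N]$; the mechanism outputs the index $K\sim\pi^{\mathrm{mrc}}_{\mathbf{x}}$. *)

From mathcomp Require Import all_boot all_order all_algebra.
From mathcomp Require Import reals.
From mathcomp Require Import sequences exp.
Set Implicit Arguments. Unset Strict Implicit. Unset Printing Implicit Defensive.
Import Order.TTheory GRing.Theory Num.Theory.
Local Open Scope ring_scope.

(* A mechanism is given by its conditional density / pmf  q x z = q(z | x). *)
Definition is_mechanism (R : realType) (X Z : Type) (q : X -> Z -> R) : Prop :=
  forall x z, 0 <= q x z.

Definition is_LDP (R : realType) (X Z : Type) (eps : R) (q : X -> Z -> R) : Prop :=
  forall x x' z, q x z <= expR eps * q x' z.

Definition mrc_weight (R : realType) (X Z : Type) (q : X -> Z -> R) (p : Z -> R)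
  (N : nat) (x : X) (zs : 'I_N -> Z) (k : 'I_N) : R :=
  q x (zs k) / p (zs k).

Definition pi_mrc (R : realType) (X Z : Type) (q : X -> Z -> R) (p : Z -> R)
  (N : nat) (x : X) (zs : 'I_N -> Z) (k : 'I_N) : R :=
  mrc_weight q p x zs k / \sum_(k' < N) mrc_weight q p x zs k'.

(* If every weight changes by a factor of at most c between two inputs, then so
   does their total; the normalized weight w k / \sum_i w i is a ratio of the
   two, so it changes by a factor of at most c^2.  For MRC with an eps-LDP
   mechanism q, the importance weights q(z|x) / p(z) satisfy this with
   c = e^eps. *)

From mathcomp Require Import all_boot all_order all_algebra.
From mathcomp Require Import reals.
From mathcomp Require Import sequences exp.
From mathcomp Require Import ring.
Import Order.TTheory GRing.Theory Num.Theory.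
Local Open Scope ring_scope.

Section NormalizedWeights.

Variables (R : realFieldType) (I : finType) (c : R) (w w' : I -> R).
Hypotheses (w_ge0 : forall i, 0 <= w i) (w'_ge0 : forall i, 0 <= w' i).
Hypotheses (le_w_w' : forall i, w i <= c * w' i).
Hypotheses (le_w'_w : forall i, w' i <= c * w i).

Lemma normalized_weight_le k :
  w k / \sum_i w i <= c ^+ 2 * (w' k / \sum_i w' i).
Proof.
set S := \sum_i w i; set S' := \sum_i w' i.
have S_ge0 : 0 <= S by exact: sumr_ge0.
have S'_ge0 : 0 <= S' by exact: sumr_ge0.
have le_S_S' : S <= c * S' by rewrite mulr_sumr; apply: ler_sum.
have le_S'_S : S' <= c * S by rewrite mulr_sumr; apply: ler_sum.
have [->|S_neq0] := eqVneq S 0.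
  by rewrite invr0 mulr0 mulr_ge0 ?sqr_ge0 ?divr_ge0.
have S_gt0 : 0 < S by rewrite lt0r S_neq0.
have S'_gt0 : 0 < S'.
  rewrite lt0r S'_ge0 andbT; apply: contraTneq S_gt0 => S'0.
  by rewrite -leNgt (le_trans le_S_S') // S'0 mulr0.
have c_gt0 : 0 < c by rewrite -(pmulr_lgt0 _ S'_gt0) (lt_le_trans S_gt0).
rewrite ler_pdivrMr // mulrA mulrAC ler_pdivlMr //.
apply: (le_trans (ler_wpM2r S'_ge0 (le_w_w' k))).
have -> : c ^+ 2 * w' k * S = c * w' k * (c * S) by ring.
by rewrite ler_wpM2l // mulr_ge0 // ltW.
Qed.

End NormalizedWeights.

Lemma mrc_weight_le_expR (R : realType) (X Z : Type) (eps : R)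
    (q : X -> Z -> R) (p : Z -> R) (N : nat) (x x' : X) (zs : 'I_N -> Z) k :
  is_LDP eps q -> 0 < p (zs k) ->
  mrc_weight q p x zs k <= expR eps * mrc_weight q p x' zs k.
Proof.
by move=> ldp p_gt0; rewrite /mrc_weight mulrA ler_wpM2r // invr_ge0 ltW.
Qed.

Theorem theorem2 (R : realType) (X Z : Type) (eps : R)
  (q : X -> Z -> R) (p : Z -> R) (N : nat)
  (hq : is_mechanism q) (hldp : is_LDP eps q)
  (hp : forall z, 0 <= p z)
  (hN : (1 <= N)%N)
  (x x' : X) (zs : 'I_N -> Z) (hzs : forall k, 0 < p (zs k)) (k : 'I_N) :
  pi_mrc q p x zs k <= expR (2 * eps) * pi_mrc q p x' zs k.
Proof.
have weight_ge0 y i : 0 <= mrc_weight q p y zs i by rewrite divr_ge0 ?hq // ltW.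
rewrite /pi_mrc expRM_natl.
by apply: normalized_weight_le => // i; apply: mrc_weight_le_expR.
Qed.
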